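(* Let $(V,\rho)$ be a finite rank torsion free $\mathfrak{sl}(2)$-module. If $(V,\rho)$ is a simple $\mathfrak{sl}(2)$-module, then its rationalization $F_{\mathrm{rat}}(V,\rho)$ is an $\mathcal R$-irreducible rational module. Conversely, if $F_{\mathrm{rat}}(V,\rho)$ is an $\mathcal R$-irreducible rational module, then either $(V,\rho)$ is a simple $\mathfrak{sl}(2)$-module or it has a unique simple $\mathfrak{sl}(2)$-submodule $(V',\rho')\subseteq(V,\rho)$ which is an essential submodule.
   Context: $\mathfrak{sl}(2)$ has basis $L_{-1}=f$, $L_0=-\tfrac12 h$, $L_1=-e$ for a Chevalley basis $e,f,h$. An $\mathfrak{sl}(2)$-module $(V,\rho)$ is a $\mathbb{C}[z]$-module via $z\cdot v=\rho(L_0)v$; it is finite rank torsion free if torsion free as a $\mathbb{C}[z]$-module and $S^{-1}V$ is finite-dimensional over $\mathbb{C}(z)$, $S=\mathbb{C}[z]\setminus\{0\}$. A submodule $V'\subseteq V$ is essential if $V/V'$ is a torsion $\mathbb{C}[z]$-module. The rationalization is $F_{\mathrm{rat}}(V,\rho)=(S^{-1}V,\rho_{\mathrm{rat}})$ with $\rho_{\mathrm{rat}}(L_{\pm1})(v/p(z))=\rho(L_{\pm1})(v)/p(z\pm1)$, $\rho_{\mathrm{rat}}(L_0)(v/p(z))=zv/p(z)$. A rational module (an $\mathfrak{sl}(2)$-module that is a finite-dimensional $\mathbb{C}(z)$-vector space with $z$ acting by $L_0$) is $\mathcal R$-irreducible if it is nonzero and has no nonzero proper $\mathfrak{sl}(2)$-submodule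 that is a $\mathbb{C}(z)$-subspace. *)

From HB Require Import structures.
From mathcomp Require Import all_boot all_order all_algebra.
From mathcomp Require Import complex.
From mathcomp Require Import reals.

Set Implicit Arguments.
Unset Strict Implicit.
Unset Printing Implicit Defensive.

Import Order.TTheory GRing.Theory Num.Theory.
Local Open Scope ring_scope.

Record sl2_module (C : fieldType) (V : lmodType C) := Sl2Module {
  rho_e : {linear V -> V};
  rho_f : {linear V -> V};
  rho_h : {linear V -> V};
  rel_he : forall v, rho_h (rho_e v) - rho_e (rho_h v) = 2%:R *: rho_e v;
  rel_hf : forall v, rho_h (rho_f v) - rho_f (rho_h v) = - (2%:R *: rho_f v);
  rel_ef : forall v, rho_e (rho_f v) - rho_f (rho_e v) = rho_h v
}.

Section Defs.
Variables (C : fieldType) (V : lmodType C) (rho : sl2_module V).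

Definition Lm1 (v : V) : V := rho_f rho v.
Definition L0 (v : V) : V := - ((2%:R)^-1 *: rho_h rho v).
Definition L1 (v : V) : V := - rho_e rho v.

(* C[z]-module structure: p(z) . v = p(L_0) v *)
Definition pact (p : {poly C}) (v : V) : V :=
  \sum_(i < size p) p`_i *: iter i L0 v.

Definition is_submodule (U : V -> Prop) : Prop :=
  [/\ U 0,
      (forall u w, U u -> U w -> U (u + w)),
      (forall (a : C) u, U u -> U (a *: u)) &
      [/\ (forall u, U u -> U (rho_e rho u)),
          (forall u, U u -> U (rho_f rho u)) &
          (forall u, U u -> U (rho_h rho u))]].

Definition simple_submodule (U : V -> Prop) : Prop :=
  [/\ is_submodule U,
      (exists u, U u /\ u <> 0) &
      (forall U', is_submodule U' -> (forall u, U' u -> U u) ->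
         (forall u, U' u -> u = 0) \/ (forall u, U u -> U' u))].

Definition simple_module : Prop := simple_submodule (fun _ => True).

Definition torsion_free : Prop :=
  forall (p : {poly C}) (v : V), p != 0 -> pact p v = 0 -> v = 0.

(* U is essential: V / U is a torsion C[z]-module *)
Definition essential (U : V -> Prop) : Prop :=
  forall v, exists2 p : {poly C}, p != 0 & U (pact p v).

(* ---- The localization S^{-1}V, S = C[z] \ {0}, represented by fractions
   v / p (pairs (v,p), p <> 0) modulo the usual equivalence. ---- *)
Definition frac_eq (x y : V * {poly C}) : Prop :=
  exists2 s : {poly C}, s != 0 & pact s (pact y.2 x.1 - pact x.2 y.1) = 0.

Definition is_frac (x : V * {poly C}) : bool := x.2 != 0.

Definition frac_add (x y : V * {poly C}) : V * {poly C} :=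
  (pact y.2 x.1 + pact x.2 y.1, x.2 * y.2).

Definition frac_scale (a b : {poly C}) (x : V * {poly C}) : V * {poly C} :=
  (pact a x.1, b * x.2).

Fixpoint frac_comb (l : seq ({poly C} * {poly C} * (V * {poly C}))) :
    V * {poly C} :=
  match l with
  | [::] => (0, 1)
  | c :: l' => frac_add (frac_scale c.1.1 c.1.2 c.2) (frac_comb l')
  end.

(* V has finite rank: S^{-1}V is finite dimensional over C(z) *)
Definition finite_rank : Prop :=
  exists basis : seq (V * {poly C}),
    all is_frac basis /\
    forall x, is_frac x ->
      exists coefs : seq ({poly C} * {poly C}),
        [/\ size coefs = size basis, all (fun c => c.2 != 0) coefs &
            frac_eq x (frac_comb (zip coefs basis))].

Definition finite_rank_torsion_free : Prop := torsion_free /\ finite_rank.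

Definition rat_Lp1 (x : V * {poly C}) : V * {poly C} :=
  (L1 x.1, x.2 \Po ('X + 1)).
Definition rat_Lm1 (x : V * {poly C}) : V * {poly C} :=
  (Lm1 x.1, x.2 \Po ('X - 1)).
Definition rat_L0 (x : V * {poly C}) : V * {poly C} := (L0 x.1, x.2).

(* W (a set of fractions, closed under the equivalence) is a C(z)-subspace
   of S^{-1}V stable under rho_rat *)
Definition rat_submodule (W : V * {poly C} -> Prop) : Prop :=
  [/\ (forall x y, is_frac x -> is_frac y -> frac_eq x y -> W x -> W y),
      (forall x, W x -> is_frac x) /\ W (0, 1),
      (forall x y, W x -> W y -> W (frac_add x y)),
      (forall a b x, b != 0 -> W x -> W (frac_scale a b x)) &
      [/\ (forall x, W x -> W (rat_Lp1 x)),
          (forall x, W x -> W (rat_Lm1 x)) &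
          (forall x, W x -> W (rat_L0 x))]].

Definition R_irreducible_rat : Prop :=
  (exists x, is_frac x /\ ~ frac_eq x (0, 1)) /\
  forall W, rat_submodule W ->
    (forall x, W x -> frac_eq x (0, 1)) \/ (forall x, is_frac x -> W x).

End Defs.

From Pilot Require Import Defs.
From HB Require Import structures.
From mathcomp Require Import all_boot all_order all_algebra.
From mathcomp Require Import complex reals ring.
From Stdlib Require Import Classical ClassicalEpsilon.
Set Implicit Arguments. Unset Strict Implicit. Unset Printing Implicit Defensive.
Import Order.TTheory GRing.Theory Num.Theory.
Local Open Scope ring_scope.

(* A simple module has no nonzero proper submodule, so the numerators of a
   rational submodule, which form a submodule, are 0 or everything.

   Conversely, R-irreducibility makes every nonzero submodule W essential: its
   localization is a nonzero rational submodule.  Finite rank yields vectors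
   u_1, ..., u_n generating V up to torsion, so any n + 1 vectors satisfy a
   nontrivial C[z]-linear relation; applied to iterates, this shows that L_1 and
   L_-1 are injective and surjective up to a nonzero polynomial factor, while
   they intertwine p(z) with p(z + 1) and p(z - 1).  Hence the generator g of
   the conductor {g | g u_j in W for all j} of an essential W divides both
   g(z + 1) H and g(z - 1) H', for polynomials H, H' independent of W.  A root
   of g then propagates along integer translates until it meets roots of H and
   of H', which bounds g by a fixed G != 0.  So G d v lies in every nonzero
   submodule for suitable d, v: the intersection of all nonzero submodules is
   nonzero, hence it is the unique simple submodule, and it is essential. *)

Lemma leq_sum_support (f : nat -> nat) T k : (forall j, (T < j)%N -> f j = 0%N) ->
  (\sum_(j < k) f j <= \sum_(j < T.+1) f j)%N.
Proof.
move=> f0; rewrite -!(big_mkord xpredT); case: (leqP k T.+1) => hk.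
  by rewrite (big_cat_nat (leq0n k) hk) /= leq_addr.
rewrite (big_cat_nat (leq0n T.+1) (ltnW hk)) /= [X in (_ + X <= _)%N]big_nat_cond.
by rewrite [X in (_ + X <= _)%N]big1 ?addn0 // => j /andP[/andP[/f0 -> _] _].
Qed.

Section Shift.
Variable F : fieldType.
Implicit Types (p q g h : {poly F}) (s t c : F).

Definition shift t p := p \Po ('X + t%:P).

Lemma shift1E p : p \Po ('X + 1) = shift 1 p.
Proof. by rewrite /shift polyC1. Qed.

Lemma shiftN1E p : p \Po ('X - 1) = shift (-1) p.
Proof. by rewrite /shift polyCN polyC1. Qed.

Lemma shiftK t : cancel (shift t) (shift (- t)).
Proof. by move=> p; rewrite /shift polyCN comp_polyXaddC_K. Qed.

Lemma shiftNK t : cancel (shift (- t)) (shift t).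
Proof. by move=> p; have := shiftK (- t) p; rewrite opprK. Qed.

Lemma shift_eq0 t p : (shift t p == 0) = (p == 0).
Proof. by rewrite /shift comp_poly2_eq0 // size_XaddC. Qed.

Lemma shift_XsubCX t c n :
  shift t (('X - c%:P) ^+ n) = ('X - (c - t)%:P) ^+ n.
Proof.
by rewrite /shift rmorphXn /= comp_polyB comp_polyX comp_polyC polyCB opprB addrA.
Qed.

Lemma dvdp_shift_XsubCX t c n p :
  ('X - c%:P) ^+ n %| p -> ('X - (c - t)%:P) ^+ n %| shift t p.
Proof. by rewrite -shift_XsubCX; apply: dvdp_comp_poly. Qed.

Lemma mup_shift s t p : p != 0 -> mup s (shift t p) = mup (s + t) p.
Proof.
move=> p0; have tp0 : shift t p != 0 by rewrite shift_eq0.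
apply/eqP; rewrite eqn_leq !mup_geq //.
have /(dvdp_shift_XsubCX (- t)) : ('X - s%:P) ^+ mup s (shift t p) %| shift t p.
  by rewrite -mup_geq.
rewrite shiftK opprK => -> /=.
have /(dvdp_shift_XsubCX t) : ('X - (s + t)%:P) ^+ mup (s + t) p %| p.
  by rewrite -mup_geq.
by rewrite addrK.
Qed.

Lemma leq_mup_dvdp s p q : p %| q -> q != 0 -> (mup s p <= mup s q)%N.
Proof.
move=> pq q0; have p0 : p != 0 by apply: contraNneq q0 => p0; move: pq; rewrite p0 dvd0p.
by rewrite mup_geq //; apply: dvdp_trans pq; rewrite -mup_geq.
Qed.

Lemma mup_prod_shift s h n : h != 0 ->
  mup s (\prod_(j < n) shift j%:R h) = (\sum_(j < n) mup (s + j%:R) h)%N.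
Proof.
move=> h0; elim: n => [|n IH]; first by rewrite !big_ord0 mupNroot // root1.
rewrite !big_ord_recr /= mupM ?shift_eq0 // ?mup_shift ?IH //.
by apply/prodf_neq0 => i _; rewrite shift_eq0.
Qed.

Lemma mup_shift_chain t g h : g != 0 -> h != 0 -> g %| shift t g * h ->
  forall k s, (mup s g <= \sum_(j < k) mup (s + j%:R * t) h + mup (s + k%:R * t) g)%N.
Proof.
move=> g0 h0 gd; elim=> [|k IH] s; first by rewrite big_ord0 mul0r addr0.
apply: (leq_trans (IH s)); rewrite big_ord_recr /= -addnA leq_add2l addnC.
have -> : s + k.+1%:R * t = s + k%:R * t + t by rewrite -natr1 mulrDl mul1r addrA.
have := leq_mup_dvdp (s + k%:R * t) gd; rewrite mulf_neq0 ?shift_eq0 //.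
by rewrite mupM ?shift_eq0 // mup_shift //; apply.
Qed.

End Shift.

Section ShiftStableDivisors.
Variable C : numClosedFieldType.
Implicit Types (p q g h : {poly C}) (s t : C).

Lemma dvdp_mup g G : g != 0 -> G != 0 ->
  (forall s, mup s g <= mup s G)%N -> g %| G.
Proof.
move=> g0 G0 le_gG; have [rs def_g] := closed_field_poly_normal g.
have lc0 : lead_coef g != 0 by rewrite lead_coef_eq0.
have le_rsG s : (count_mem s rs <= mup s G)%N.
  rewrite -mu_prod_XsubC; apply: leq_trans (le_gG s).
  by apply: leq_mup_dvdp => //; rewrite [X in _ %| X]def_g dvdpZr.
rewrite def_g dvdpZl //; elim: rs G G0 {def_g le_gG} le_rsG => [|r rs IH] G G0 le_rsG.
  by rewrite big_nil dvd1p.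
have /dvdpP[G' def_G] : 'X - r%:P %| G.
  by rewrite XsubC_dvd //; apply: leq_trans (le_rsG r); rewrite /= eqxx.
have G'0 : G' != 0 by apply: contraNneq G0; rewrite def_G => ->; rewrite mul0r.
rewrite big_cons def_G (mulrC G') dvdp_mul2l ?polyXsubC_eq0 //.
apply: IH => // s; have := le_rsG s; rewrite def_G mupM ?polyXsubC_eq0 //.
rewrite -(expr1 ('X - r%:P)) mup_XsubCX /= addnC.
by case: (r == s); rewrite ?leq_add2r // ?add0n.
Qed.

Lemma exists_nonroot_progression s t g : g != 0 -> t != 0 ->
  exists k : nat, ~~ root g (s + k%:R * t).
Proof.
move=> g0 t0; pose rs := [seq s + k%:R * t | k <- iota 0 (size g)].
have /allPn[_ /mapP[k _ ->] nr] : ~~ all (root g) rs; last by exists k.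
apply/negP => all_roots.
have rs_uniq : uniq rs.
  rewrite map_inj_uniq ?iota_uniq // => a b /addrI /(mulIf t0) /eqP.
  by rewrite eqr_nat => /eqP.
by have := max_poly_roots g0 all_roots rs_uniq; rewrite size_map size_iota ltnn.
Qed.

Lemma mup_le_shifted_sum s t g h : t != 0 -> g != 0 -> h != 0 ->
  g %| shift t g * h -> exists k, (mup s g <= \sum_(j < k) mup (s + j%:R * t) h)%N.
Proof.
move=> t0 g0 h0 gd; have [k nr] := exists_nonroot_progression s g0 t0.
by exists k; have := mup_shift_chain g0 h0 gd k s; rewrite (mupNroot nr) addn0.
Qed.

Lemma bounded_nat_elements (xs : seq C) :
  exists T, forall x (n : nat), x \in xs -> x = n%:R -> (n <= T)%N.
Proof.
elim: xs => [|x xs [T hT]]; first by exists 0%N.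
have [[m ->]|nx] := classic (exists m : nat, x = m%:R).
  exists (maxn m T) => y n /predU1P[-> /eqP|yxs e]; last first.
    by rewrite leq_max (hT y n yxs e) orbT.
  by rewrite eqr_nat => /eqP <-; rewrite leq_maxl.
exists T => y n /predU1P[-> e|yxs]; [by case: nx; exists n | exact: hT].
Qed.

Lemma root_differences_bounded h h' : h != 0 -> h' != 0 ->
  exists T, forall r r' (n : nat), root h r -> root h' r' -> r - r' = n%:R -> (n <= T)%N.
Proof.
move=> h0 h'0.
have roots_in p : p != 0 -> {rs : seq C | forall r, root p r -> r \in rs}.
  move=> p0; have [rs def_p] := closed_field_poly_normal p; exists rs => r.
  by rewrite {1}def_p rootZ ?lead_coef_eq0 // root_prod_XsubC.
have [[rs hrs] [rs' hrs']] := (roots_in h h0, roots_in h' h'0).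
have [T hT] := bounded_nat_elements [seq r - r' | r <- rs, r' <- rs'].
exists T => r r' n /hrs r_rs /hrs' r'_rs'; apply: hT.
exact: (allpairs_f (fun r r' => r - r')).
Qed.

Lemma shift_divisors_bounded h h' : h != 0 -> h' != 0 -> exists2 G, G != 0 &
  forall g, g != 0 -> g %| shift 1 g * h -> g %| shift (-1) g * h' -> g %| G.
Proof.
move=> h0 h'0; have [T hT] := root_differences_bounded h0 h'0.
have G0 : \prod_(j < T.+1) shift j%:R h != 0.
  by apply/prodf_neq0 => j _; rewrite shift_eq0.
exists (\prod_(j < T.+1) shift j%:R h) => // g g0 dvd_h dvd_h'.
apply: dvdp_mup => // s; rewrite mup_prod_shift //.
have [-> //|mpos] := posnP (mup s g).
have [k le_k] := mup_le_shifted_sum s (oner_neq0 C) g0 h0 dvd_h.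
have m1_neq0 : (-1 : C) != 0 by rewrite oppr_eq0 oner_neq0.
have [k' le_k'] := mup_le_shifted_sum s m1_neq0 g0 h'0 dvd_h'.
have [j' rj'] : exists j' : nat, root h' (s - j'%:R).
  have : (\sum_(j < k') mup (s + j%:R * -1) h' != 0)%N.
    by rewrite -lt0n (leq_trans mpos).
  rewrite sum_nat_eq0 negb_forall => /existsP[j'].
  by rewrite -lt0n -XsubC_dvd // dvdp_XsubCl mulrN1; exists j'.
apply: (leq_trans le_k _); under eq_bigr => j _ do rewrite mulr1.
apply: (@leq_sum_support (fun j => mup (s + j%:R) h)) => j lt_Tj.
apply/eqP; rewrite -leqn0 leqNgt -XsubC_dvd //; apply/negP; rewrite dvdp_XsubCl => rj.
have e : s + j%:R - (s - j'%:R) = (j + j')%:R by rewrite natrD; ring.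
by have := hT _ _ _ rj rj' e; rewrite leqNgt (leq_trans lt_Tj) ?leq_addr.
Qed.

End ShiftStableDivisors.

Section PolyIdeals.
Variable F : fieldType.

Lemma common_nonzero_multiple (Q : nat -> {poly F} -> Prop) n :
  (forall j g q, Q j g -> Q j (q * g)) ->
  (forall j, (j < n)%N -> exists2 g, g != 0 & Q j g) ->
  exists2 g, g != 0 & forall j, (j < n)%N -> Q j g.
Proof.
move=> Qmul; elim: n => [|n IH] hQ; first by exists 1; rewrite ?oner_neq0.
have [g g0 Qg] := IH (fun j lt_jn => hQ j (ltnW lt_jn)).
have [gn gn0 Qgn] := hQ n (ltnSn n).
exists (gn * g); first by rewrite mulf_neq0.
move=> j; rewrite ltnS leq_eqVlt => /predU1P[->|lt_jn]; last exact/Qmul/Qg.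
by rewrite mulrC; apply: Qmul.
Qed.

Lemma ideal_generator (I : {poly F} -> Prop) :
  (forall g q, I g -> I (q * g)) -> (forall g q, I g -> I q -> I (g - q)) ->
  (exists2 g, g != 0 & I g) -> exists2 g, g != 0 /\ I g & forall q, I q -> g %| q.
Proof.
move=> Imul IB [g g0 Ig]; have [n] := ubnP (size g).
elim: n g g0 Ig => // n IH g g0 Ig lt_gn.
have [[q [Iq ndvd]]|all_dvd] := classic (exists q, I q /\ ~~ (g %| q)); last first.
  exists g => [|q Iq]; first by split.
  by apply: contraT => ndvd; case: all_dvd; exists q.
have r0 : q %% g != 0 by apply: contra ndvd => /eqP/modp_eq0P.
have Ir : I (q %% g).
  have -> : q %% g = q - q %/ g * g by rewrite {2}(divp_eq q g) addrC addKr.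
  exact: IB Iq (Imul _ _ Ig).
by apply: IH r0 Ir _; rewrite -ltnS (leq_trans _ lt_gn) // ltnS ltn_modp.
Qed.

End PolyIdeals.

Section ModuleAction.
Variables (C : fieldType) (V : lmodType C).
Context {rho : sl2_module V}.

Local Notation L0 := (L0 rho).
Local Notation L1 := (L1 rho).
Local Notation Lm1 := (Lm1 rho).
Local Notation pact := (pact rho).
Implicit Types (p q : {poly C}) (u v w : V) (x y : V * {poly C}).

Fact L0_is_linear : linear L0.
Proof.
move=> a u w; rewrite /Defs.L0 linearP scalerDr opprD scalerA mulrC -scalerA.
by rewrite scalerN.
Qed.
HB.instance Definition _ := GRing.isLinear.Build C V V *:%R L0 L0_is_linear.

Fact L1_is_linear : linear L1.
Proof. by move=> a u w; rewrite /Defs.L1 linearP opprD scalerN. Qed.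
HB.instance Definition _ := GRing.isLinear.Build C V V *:%R L1 L1_is_linear.

HB.instance Definition _ := GRing.Linear.copy Lm1 (rho_f rho).

Fact iter_L0_is_linear n : linear (iter n L0).
Proof. by elim: n => // n IH a u w; rewrite /= IH linearP. Qed.

Fact pact_is_linear p : linear (pact p).
Proof.
move=> a u w; rewrite /Defs.pact scaler_sumr -big_split /=; apply: eq_bigr => i _.
by rewrite iter_L0_is_linear scalerDr !scalerA mulrC.
Qed.
HB.instance Definition _ p := GRing.isLinear.Build C V V *:%R (pact p) (pact_is_linear p).

Lemma pact_widen n p v : (size p <= n)%N ->
  pact p v = \sum_(i < n) p`_i *: iter i L0 v.
Proof.
move=> hn; rewrite /Defs.pact (big_ord_widen n (fun i => p`_i *: iter i L0 v) hn).
rewrite big_mkcond /=; apply: eq_bigr => i _.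
by case: ifP => // /negbT; rewrite -leqNgt => /(nth_default 0) ->; rewrite scale0r.
Qed.

Lemma pact0 v : pact 0 v = 0.
Proof. by rewrite /Defs.pact size_poly0 big_ord0. Qed.

Lemma pactD p q v : pact (p + q) v = pact p v + pact q v.
Proof.
set n := maxn (size p) (size q).
rewrite (@pact_widen n (p + q)); last by rewrite (leq_trans (size_polyD _ _)).
rewrite (@pact_widen n p) ?leq_maxl // (@pact_widen n q) ?leq_maxr //.
by rewrite -big_split /=; apply: eq_bigr => i _; rewrite coefD scalerDl.
Qed.

Lemma pactZl a p v : pact (a *: p) v = a *: pact p v.
Proof.
rewrite (@pact_widen (size p) (a *: p)) ?size_scale_leq // /Defs.pact scaler_sumr.
by apply: eq_bigr => i _; rewrite coefZ scalerA.
Qed.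

Lemma pactB p q v : pact (p - q) v = pact p v - pact q v.
Proof. by rewrite pactD -(scaleN1r q) pactZl scaleN1r. Qed.

Lemma pact_suml n (P : 'I_n -> {poly C}) v :
  pact (\sum_(i < n) P i) v = \sum_(i < n) pact (P i) v.
Proof. exact: (big_morph (pact^~ v) (fun p q => pactD p q v) (pact0 v)). Qed.

Lemma pactC c v : pact c%:P v = c *: v.
Proof. by rewrite (@pact_widen 1) ?size_polyC ?leq_b1 // big_ord1 /= coefC. Qed.

Lemma pact1 v : pact 1 v = v.
Proof. by rewrite -polyC1 pactC scale1r. Qed.

Lemma pactL0 p v : pact p (L0 v) = L0 (pact p v).
Proof.
by rewrite /Defs.pact linear_sum; apply: eq_bigr => i _; rewrite linearZ -iterSr.
Qed.

Lemma pactMX p v : pact (p * 'X) v = L0 (pact p v).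
Proof.
rewrite (@pact_widen (size p).+1 (p * 'X)); last first.
  by rewrite (leq_trans (size_polyMleq _ _)) // size_polyX addn2.
rewrite big_ord_recl coefMX eqxx scale0r add0r /Defs.pact linear_sum.
by apply: eq_bigr => i _; rewrite linearZ coefMX.
Qed.

Lemma pactX v : pact 'X v = L0 v.
Proof. by rewrite -(mul1r 'X) pactMX pact1. Qed.

Lemma pactM p q v : pact (p * q) v = pact p (pact q v).
Proof.
elim/poly_ind: q v => [|q c IH] v; first by rewrite mulr0 !pact0 linear0.
rewrite mulrDr mulrA pactD pactMX IH -pactL0 (mulrC p) mul_polyC pactZl.
by rewrite pactD pactMX pactC linearD linearZ.
Qed.

Lemma pactAC p q v : pact p (pact q v) = pact q (pact p v).
Proof. by rewrite -!pactM mulrC. Qed.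

Section TorsionFree.
Hypothesis tf : torsion_free rho.

Lemma pact_inj p : p != 0 -> injective (pact p).
Proof.
move=> p0 u w e; apply/eqP; rewrite -subr_eq0; apply/eqP/(tf p0).
by rewrite linearB /= e subrr.
Qed.

Lemma frac_eqP x y : frac_eq rho x y <-> pact y.2 x.1 = pact x.2 y.1.
Proof.
split=> [[s s0 /(tf s0)/eqP]|e]; first by rewrite subr_eq0 => /eqP.
by exists 1; rewrite ?oner_neq0 // e subrr pact1.
Qed.

Lemma frac_eq0P x : frac_eq rho x (0, 1) <-> x.1 = 0.
Proof. by rewrite frac_eqP /= pact1 linear0. Qed.

End TorsionFree.

Section Submodules.
Variable U : V -> Prop.
Hypothesis sU : is_submodule rho U.

Lemma submod0 : U 0. Proof. by case: sU. Qed.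
Lemma submodD u w : U u -> U w -> U (u + w). Proof. by case: sU => _ h _ _; apply: h. Qed.
Lemma submodZ a u : U u -> U (a *: u). Proof. by case: sU => _ _ h _; apply: h. Qed.
Lemma submodN u : U u -> U (- u). Proof. by rewrite -scaleN1r; apply: submodZ. Qed.
Lemma submodE u : U u -> U (rho_e rho u). Proof. by case: sU => _ _ _ [h _ _]; apply: h. Qed.
Lemma submodF u : U u -> U (rho_f rho u). Proof. by case: sU => _ _ _ [_ h _]; apply: h. Qed.
Lemma submodH u : U u -> U (rho_h rho u). Proof. by case: sU => _ _ _ [_ _ h]; apply: h. Qed.
Lemma submodL0 u : U u -> U (L0 u). Proof. by move=> Uu; apply/submodN/submodZ/submodH. Qed.
Lemma submodL1 u : U u -> U (L1 u). Proof. by move=> Uu; apply/submodN/submodE. Qed.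
Lemma submodLm1 u : U u -> U (Lm1 u). Proof. exact: submodF. Qed.

Lemma submod_sum n (G : 'I_n -> V) : (forall i, U (G i)) -> U (\sum_(i < n) G i).
Proof.
elim: n G => [|n IH] G UG; first by rewrite big_ord0; apply: submod0.
by rewrite big_ord_recr /=; apply: submodD => //; apply: IH.
Qed.

Lemma submod_pact p u : U u -> U (pact p u).
Proof.
move=> Uu; apply: submod_sum => i; apply: submodZ.
by elim: (nat_of_ord i) => //= k IH; apply: submodL0.
Qed.

End Submodules.

Definition heart v :=
  forall W, is_submodule rho W -> (exists w, W w /\ w <> 0) -> W v.

Lemma heart_submodule : is_submodule rho heart.
Proof.
split; first by move=> W sW _; apply: submod0.
- by move=> u w hu hw W sW nzW; apply: submodD; [|apply: hu|apply: hw].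
- by move=> a u hu W sW nzW; apply: submodZ; [|apply: hu].
split=> u hu W sW nzW; [apply: submodE|apply: submodF|apply: submodH] => //.
all: exact: hu.
Qed.

Section NonzeroHeart.
Hypothesis nz_heart : exists u, heart u /\ u <> 0.

Lemma heart_simple : simple_submodule rho heart.
Proof.
split=> //; first exact: heart_submodule.
move=> U sU _; have [nzU|zU] := classic (exists u, U u /\ u <> 0).
  by right=> u; apply.
by left=> u Uu; apply: NNPP => u0; apply: zU; exists u.
Qed.

Lemma simple_submodule_heart U : simple_submodule rho U -> forall v, U v <-> heart v.
Proof.
case=> sU nzU simpU v; split=> [Uv|]; last by apply.
have [heart0|U_heart] := simpU heart heart_submodule (fun u hu => hu U sU nzU).
  by have [u [hu u0]] := nz_heart; case: u0; apply: heart0.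
exact: U_heart.
Qed.

End NonzeroHeart.
End ModuleAction.

Arguments heart {C V} rho v.

Section Sl2Relations.
Variables (C : numFieldType) (V : lmodType C).
Context {rho : sl2_module V}.

Local Notation L0 := (L0 rho).
Local Notation L1 := (L1 rho).
Local Notation Lm1 := (Lm1 rho).
Local Notation pact := (pact rho).
Local Notation E := (rho_e rho).
Local Notation F := (rho_f rho).
Local Notation H := (rho_h rho).
Implicit Types (p q : {poly C}) (u v w x : V).

Lemma L1L0 v : L1 (L0 v) = L0 (L1 v) + L1 v.
Proof.
rewrite /Defs.L1 /Defs.L0 linearN opprK linearZ [H (- _)]linearN scalerN opprK.
have -> : H (E v) = E (H v) + 2%:R *: E v by rewrite -(rel_he rho v) addrC subrK.
by rewrite scalerDr scalerA mulVf ?pnatr_eq0 // scale1r addrK.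
Qed.

Lemma Lm1L0 v : Lm1 (L0 v) = L0 (Lm1 v) - Lm1 v.
Proof.
rewrite /Defs.Lm1 /Defs.L0 linearN linearZ.
have -> : H (F v) = F (H v) - 2%:R *: F v by rewrite -(rel_hf rho v) addrC subrK.
by rewrite scalerDr scalerN scalerA mulVf ?pnatr_eq0 // scale1r opprD opprK addrK.
Qed.

Lemma L1Lm1 v : L1 (Lm1 v) = Lm1 (L1 v) + 2%:R *: L0 v.
Proof.
rewrite /Defs.L1 /Defs.Lm1 /Defs.L0 linearN scalerN scalerA mulfV ?pnatr_eq0 //.
by rewrite scale1r -(rel_ef rho v) opprB addKr.
Qed.

Lemma linear_pact_shift (A : {linear V -> V}) t :
  (forall w, A (L0 w) = L0 (A w) + t *: A w) ->
  forall p w, A (pact p w) = pact (shift t p) (A w).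
Proof.
move=> AL0 p w; elim/poly_ind: p => [|q c IH].
  by rewrite /shift comp_poly0 !pact0 linear0.
have -> : shift t (q * 'X + c%:P) = shift t q * 'X + t *: shift t q + c%:P.
  by rewrite /shift comp_poly_MXaddC mulrDr -mul_polyC (mulrC t%:P).
by rewrite !pactD !pactMX !pactC linearD linearZ AL0 IH pactZl.
Qed.

Lemma L1_pact p w : L1 (pact p w) = pact (shift 1 p) (L1 w).
Proof. by apply: (linear_pact_shift (A := L1)) => x /=; rewrite L1L0 scale1r. Qed.

Lemma Lm1_pact p w : Lm1 (pact p w) = pact (shift (-1) p) (Lm1 w).
Proof. by apply: (linear_pact_shift (A := Lm1)) => x /=; rewrite Lm1L0 scaleN1r. Qed.

Definition mu (k : nat) : {poly C} := k.+1%:R *: (2%:R *: 'X - k%:R%:P).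
Definition nu (k : nat) : {poly C} := k.+1%:R *: (- 2%:R *: 'X - k%:R%:P).

Lemma mu_neq0 k : mu k != 0.
Proof.
apply/eqP => /(congr1 (coefp 1)); rewrite /= coefZ coefB coefZ coefX coefC /=.
by rewrite mulr1 subr0 coef0 => /eqP; rewrite mulf_eq0 !pnatr_eq0.
Qed.

Lemma nu_neq0 k : nu k != 0.
Proof.
apply/eqP => /(congr1 (coefp 1)); rewrite /= coefZ coefB coefZ coefX coefC /=.
by rewrite mulr1 subr0 coef0 => /eqP; rewrite mulf_eq0 oppr_eq0 !pnatr_eq0.
Qed.

Lemma mu_shift k : shift (-1) (mu k) + 2%:R *: 'X = mu k.+1.
Proof.
rewrite /mu /shift comp_polyZ comp_polyB comp_polyZ comp_polyX comp_polyC.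
rewrite -!mul_polyC !polyC_natr polyCN polyC1 -[k.+2%:R]natr1 -[k.+1%:R]natr1.
ring.
Qed.

Lemma nu_shift k : shift 1 (nu k) - 2%:R *: 'X = nu k.+1.
Proof.
rewrite /nu /shift comp_polyZ comp_polyB comp_polyZ comp_polyX comp_polyC.
rewrite -!mul_polyC !polyC_natr polyCN polyC1 -[k.+2%:R]natr1 -[k.+1%:R]natr1.
ring.
Qed.

Lemma L1_iter_Lm1 x : L1 x = 0 ->
  forall k, L1 (iter k.+1 Lm1 x) = pact (mu k) (iter k Lm1 x).
Proof.
move=> L1x; elim=> [|k IH].
  by rewrite /= L1Lm1 L1x linear0 add0r /mu scale1r subr0 pactZl pactX.
rewrite [iter k.+2 _ _]/= L1Lm1 -[Lm1 (iter k Lm1 x)]/(iter k.+1 Lm1 x) IH.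
by rewrite Lm1_pact -mu_shift pactD pactZl pactX.
Qed.

Lemma Lm1_iter_L1 x : Lm1 x = 0 ->
  forall k, Lm1 (iter k.+1 L1 x) = pact (nu k) (iter k L1 x).
Proof.
have Lm1L1 y : Lm1 (L1 y) = L1 (Lm1 y) - 2%:R *: L0 y by rewrite L1Lm1 addrK.
move=> Lm1x; elim=> [|k IH].
  by rewrite /= Lm1L1 Lm1x linear0 sub0r /nu scale1r subr0 pactZl pactX scaleNr.
rewrite [iter k.+2 _ _]/= Lm1L1 -[L1 (iter k L1 x)]/(iter k.+1 L1 x) IH.
by rewrite L1_pact -nu_shift pactB pactZl pactX.
Qed.

End Sl2Relations.

Section Localization.
Variables (C : numFieldType) (V : lmodType C) (rho : sl2_module V).
Hypothesis tf : torsion_free rho.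

Local Notation L0 := (L0 rho).
Local Notation L1 := (L1 rho).
Local Notation Lm1 := (Lm1 rho).
Local Notation pact := (pact rho).
Local Notation frac_eq := (frac_eq rho).
Local Notation frac_add := (frac_add rho).
Local Notation frac_scale := (frac_scale rho).
Implicit Types (u v w : V).

Lemma rat_submodule_numerators W : rat_submodule rho W ->
  is_submodule rho (fun v => W (v, 1)).
Proof.
move=> [_ [_ W01] WD WZ [WL1 WLm1 WL0]]; split=> //.
- by move=> u w /WD/[apply]; rewrite /frac_add /= !pact1 mulr1.
- by move=> a u /(WZ a%:P 1 _ (oner_neq0 _)); rewrite /frac_scale /= pactC mulr1.
split=> u Wu.
- have := WZ (-1)%:P 1 _ (oner_neq0 _) (WL1 _ Wu).
  by rewrite /frac_scale /rat_Lp1 /= pactC comp_polyC mulr1 scaleN1r opprK.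
- by have := WLm1 _ Wu; rewrite /rat_Lm1 /= comp_polyC.
- have := WZ (- 2%:R)%:P 1 _ (oner_neq0 _) (WL0 _ Wu).
  rewrite /frac_scale /rat_L0 /= pactC mulr1 /Defs.L0 scalerN scaleNr opprK.
  by rewrite scalerA mulfV ?pnatr_eq0 // scale1r.
Qed.

Lemma simple_R_irreducible : simple_module rho -> R_irreducible_rat rho.
Proof.
case=> _ [u0 [_ u00]] simp; split.
  by exists (u0, 1); split; [rewrite /is_frac oner_neq0 | move/(frac_eq0P tf)].
move=> W rW; have sU := rat_submodule_numerators rW.
move: rW => -[Wcl [Wfr _] _ WZ _].
have [[[x1 x2] [Wx /(frac_eq0P tf)/= x10]]|] :=
  classic (exists x, W x /\ ~ frac_eq x (0, 1)); last first.
  by move=> none; left=> x Wx; apply: NNPP => nx; apply: none; exists x.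
right; have x20 : x2 != 0 := Wfr _ Wx.
have Ux1 : W (x1, 1).
  apply: Wcl (WZ x2 1 _ (oner_neq0 _) Wx); rewrite /is_frac /= ?mul1r ?oner_neq0 //.
  by apply/(frac_eqP tf); rewrite /= pact1 mul1r.
have [U0|Uall] := simp _ sU (fun _ _ => I); first by case: x10; apply: U0.
move=> [v p] p0; have := WZ 1 p _ p0 (Uall v I).
by rewrite /frac_scale /= pact1 mulr1.
Qed.

Section Localize.
Variable U : V -> Prop.
Hypothesis sU : is_submodule rho U.

Definition localize x :=
  is_frac x /\ exists u q, [/\ U u, q != 0 & pact q x.1 = pact x.2 u].

Lemma localize_frac_eq x y :
  is_frac x -> is_frac y -> frac_eq x y -> localize x -> localize y.
Proof.
case: x y => [x1 x2] [y1 y2] x20 y20 /(frac_eqP tf)/= exy [_ [u [q [Uu q0 /= ex]]]].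
split=> //; exists u, q; split=> //=; apply: (pact_inj tf x20).
by rewrite pactAC -exy (pactAC q) ex pactAC.
Qed.

Lemma localizeD x y : localize x -> localize y -> localize (frac_add x y).
Proof.
case: x y => [x1 x2] [y1 y2] [x20 [u [q [Uu q0 /= ex]]]].
case=> y20 [u' [q' [Uu' q'0 /= ey]]].
split; first by rewrite /is_frac mulf_neq0.
exists (pact q' u + pact q u'), (q * q'); split.
- by apply: (submodD sU); apply: (submod_pact sU).
- by rewrite mulf_neq0.
rewrite /= !linearD /=; congr (_ + _).
  have -> : pact (q * q') (pact y2 x1) = pact (q' * y2) (pact q x1).
    by rewrite -!pactM; congr pact; rewrite -mulrA mulrC.
  by rewrite ex -!pactM; congr pact; rewrite -mulrA mulrC [y2 * x2]mulrC.
have -> : pact (q * q') (pact x2 y1) = pact (q * x2) (pact q' y1).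
  by rewrite -!pactM mulrAC.
by rewrite ey -!pactM; congr pact; rewrite -mulrA mulrC.
Qed.

Lemma localizeZ a b x : b != 0 -> localize x -> localize (frac_scale a b x).
Proof.
case: x => [x1 x2] b0 [x20 [u [q [Uu q0 /= e]]]].
split; first by rewrite /is_frac mulf_neq0.
exists (pact a u), (b * q); split; rewrite ?mulf_neq0 //; first exact: (submod_pact sU).
have -> : pact (b * q) (pact a x1) = pact (b * a) (pact q x1).
  by rewrite -!pactM mulrAC.
by rewrite e -!pactM mulrAC.
Qed.

Lemma localize_rat_submodule : rat_submodule rho localize.
Proof.
split.
- exact: localize_frac_eq.
- split=> [x []//|]; split; first by rewrite /is_frac oner_neq0.
  by exists 0, 1; rewrite oner_neq0; split=> //; apply: (submod0 sU).
- exact: localizeD.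
- exact: localizeZ.
split=> -[x1 x2] [x20 [u [q [Uu q0 /= e]]]].
- split; first by rewrite /is_frac /= shift1E shift_eq0.
  exists (L1 u), (shift 1 q); rewrite shift_eq0; split=> //; first exact: (submodL1 sU).
  by rewrite /= shift1E -!L1_pact e.
- split; first by rewrite /is_frac /= shiftN1E shift_eq0.
  exists (Lm1 u), (shift (-1) q); rewrite shift_eq0; split=> //; first exact: (submodLm1 sU).
  by rewrite /= shiftN1E -!Lm1_pact e.
- split=> //; exists (L0 u), q; split=> //; first exact: (submodL0 sU).
  by rewrite /= !pactL0 e.
Qed.

End Localize.

Lemma R_irreducible_essential U : R_irreducible_rat rho -> is_submodule rho U ->
  (exists u, U u /\ u <> 0) -> essential rho U.
Proof.
move=> [_ irr] sU [u0 [Uu0 u00]].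
have loc_u0 : localize U (u0, 1).
  by split; [rewrite /is_frac oner_neq0 | exists u0, 1; rewrite oner_neq0 pact1].
have [/(_ _ loc_u0)/(frac_eq0P tf)//|all_loc v] := irr _ (localize_rat_submodule sU).
have [_ [u [q [Uu q0 /= e]]]] := all_loc (v, 1) (oner_neq0 _).
by exists q => //; rewrite e pact1.
Qed.

End Localization.

Section Dependence.
Variables (C : fieldType) (V : lmodType C) (rho : sl2_module V).

Local Notation pact := (pact rho).
Implicit Types (u v w x : V) (us : seq V).

Definition in_span us x :=
  exists a : nat -> {poly C}, x = \sum_(j < size us) pact (a j) us`_j.

Lemma in_span_pact us p x : in_span us x -> in_span us (pact p x).
Proof.
case=> a ->; exists (fun j => p * a j); rewrite linear_sum.
by apply: eq_bigr => j _; rewrite /= pactM.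
Qed.

Lemma frac_comb_span coefs (basis : seq (V * {poly C})) :
  size coefs = size basis -> all (fun c : {poly C} * {poly C} => c.2 != 0) coefs ->
  all (@is_frac C V) basis ->
  (frac_comb rho (zip coefs basis)).2 != 0 /\
  in_span (map fst basis) (frac_comb rho (zip coefs basis)).1.
Proof.
elim: coefs basis => [|c cs IH] [|b bs] //=.
  by move=> _ _ _; split; [exact: oner_neq0 | exists (fun _ => 0); rewrite big_ord0].
move=> [sz] /andP[c0 c_nz] /andP[b0 b_frac].
have [d0 [a ea]] := IH bs sz c_nz b_frac.
split; first by rewrite !mulf_neq0.
exists (fun j => if j is j'.+1 then c.2 * b.2 * a j'
                 else (frac_comb rho (zip cs bs)).2 * c.1).
rewrite big_ord_recl -pactM; congr (_ + _).
by rewrite ea linear_sum; apply: eq_bigr => j _; rewrite /= add0n -pactM.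
Qed.

Lemma finite_rank_spanning : torsion_free rho -> finite_rank rho ->
  exists us, forall x, exists2 d, d != 0 & in_span us (pact d x).
Proof.
move=> tf [basis [b_frac hb]]; exists (map fst basis) => x.
have [coefs [sz c_nz /(frac_eqP tf)/=]] := hb (x, 1) (oner_neq0 _).
rewrite pact1 => e; have [d0 hs] := frac_comb_span sz c_nz b_frac.
by exists (frac_comb rho (zip coefs basis)).2; rewrite // e.
Qed.

Lemma spanning_dependence us :
  (forall x, exists2 d, d != 0 & in_span us (pact d x)) ->
  forall f : nat -> V, exists cs : nat -> {poly C},
    (exists2 k, (k <= size us)%N & cs k != 0) /\
    \sum_(k < (size us).+1) pact (cs k) (f k) = 0.
Proof.
move=> hsp f; set N := size us.
have /ClassicalEpsilon.choice[dd hdd] :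
    forall k, exists d, d != 0 /\ in_span us (pact d (f k)).
  by move=> k; have [d d0 hd] := hsp (f k); exists d.
have /ClassicalEpsilon.choice[aa haa] : forall k, exists a : nat -> {poly C},
    pact (dd k) (f k) = \sum_(j < N) pact (a j) us`_j.
  by move=> k; have [_ [a ha]] := hdd k; exists a.
(* M has a zero last column, so v *m M = 0 for some v != 0: then all the
   coordinates of \sum_k v_k dd_k f_k on [us] vanish. *)
pose M : 'M[{poly C}]_N.+1 := \matrix_(k, j) (if (j < N)%N then aa k j else 0).
have /det0P[v v0 vM] : \det M == 0.
  apply/eqP; rewrite (expand_det_col _ ord_max) big1 // => i _.
  by rewrite mxE /= ltnn mul0r.
have [i vi] : exists i, v 0 i != 0.
  apply: not_all_not_ex => v_eq0; case/eqP: v0; apply/rowP => i.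
  by rewrite mxE; apply/eqP/negPn/negP/v_eq0.
exists (fun k => v 0 (inord k) * dd k); split.
  exists i; first by rewrite -ltnS.
  by rewrite inord_val mulf_neq0 //; case: (hdd i).
under eq_bigr => k _ do rewrite inord_val pactM haa linear_sum.
rewrite exchange_big /= big1 // => j _.
under eq_bigr => k _ do rewrite /= -pactM.
rewrite -pact_suml.
have -> : \sum_(k < N.+1) v 0 k * aa k j = (v *m M) 0 (widen_ord (leqnSn N) j).
  by rewrite mxE; apply: eq_bigr => k _; rewrite mxE /= ltn_ord.
by rewrite vM mxE pact0.
Qed.

Section Intertwiners.
Hypothesis tf : torsion_free rho.
Variable N : nat.
Hypothesis dep : forall f : nat -> V, exists cs : nat -> {poly C},
    (exists2 k, (k <= N)%N & cs k != 0) /\ \sum_(k < N.+1) pact (cs k) (f k) = 0.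
Variables (A : {linear V -> V}) (t : C).
Hypothesis A_pact : forall p w, A (pact p w) = pact (shift t p) (A w).

Lemma intertwiner_injective (B : V -> V) (m : nat -> {poly C}) x :
  (forall k, m k != 0) -> A x = 0 ->
  (forall k, A (iter k.+1 B x) = pact (m k) (iter k B x)) -> x = 0.
Proof.
(* Applying A to a relation among the B^k x, k <= K + 1, whose top coefficient
   is nonzero yields a nontrivial relation among the B^k x, k <= K. *)
move=> m0 Ax AB; have [cs [lead_cs rel_cs]] := dep (fun k => iter k B x).
elim: N cs lead_cs rel_cs => [|K IH] cs [k le_kK ck] rel_cs.
  by move: le_kK ck rel_cs; rewrite leqn0 => /eqP -> c0; rewrite big_ord1; apply: tf.
have [cK0|cK0] := eqVneq (cs K.+1) 0.
  move: rel_cs; rewrite big_ord_recr /= cK0 pact0 addr0; apply: IH.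
  exists k => //; move: le_kK; rewrite leq_eqVlt ltnS => /predU1P[kK|//].
  by rewrite kK cK0 eqxx in ck.
apply: (IH (fun k => shift t (cs k.+1) * m k)).
  by exists K => //; rewrite mulf_neq0 ?shift_eq0.
move/(congr1 A): rel_cs; rewrite linear0 linear_sum big_ord_recl /= A_pact Ax linear0 add0r.
move=> e; rewrite -[RHS]e; apply: eq_bigr => i _.
by rewrite /= A_pact /bump leq0n add1n add0n -[B _]/(iter i.+1 B x) AB pactM.
Qed.

Lemma intertwiner_essentially_surjective : (forall y, A y = 0 -> y = 0) ->
  forall x, exists2 h, h != 0 & exists y, pact h x = A y.
Proof.
(* A relation among the A^k x either has a nonzero constant coefficient c_0,
   which puts c_0 x in the image of A, or is A applied to a shorter one. *)
move=> Ainj x; have [cs [lead_cs rel_cs]] := dep (fun k => iter k A x).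
elim: N cs lead_cs rel_cs => [|K IH] cs [k le_kK ck] rel_cs.
  move: le_kK ck rel_cs; rewrite leqn0 => /eqP -> c0; rewrite big_ord1 => e.
  by exists (cs 0%N) => //; exists 0; rewrite linear0.
move: rel_cs; rewrite big_ord_recl /=.
set Y := \sum_(i < K.+1) pact (shift (- t) (cs i.+1)) (iter i A x).
have -> : \sum_(i < K.+1) pact (cs (lift ord0 i)) (iter (lift ord0 i) A x) = A Y.
  by rewrite linear_sum; apply: eq_bigr => i _; rewrite /= A_pact shiftNK.
move=> rel_cs; have [c0|c0] := eqVneq (cs 0%N) 0; last first.
  exists (cs 0%N) => //; exists (- Y).
  by rewrite linearN; apply/eqP; rewrite -addr_eq0 rel_cs.
move: rel_cs; rewrite c0 pact0 add0r => /Ainj rel_Y.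
apply: (IH (fun i => shift (- t) (cs i.+1))) => //.
case: k le_kK ck => [|k] le_kK ck; first by rewrite c0 eqxx in ck.
by exists k; rewrite ?shift_eq0.
Qed.

End Intertwiners.
End Dependence.

Section FiniteRank.
Variables (C : numClosedFieldType) (V : lmodType C) (rho : sl2_module V).
Hypothesis tf : torsion_free rho.
Variable us : seq V.
Hypothesis span_us : forall x, exists2 d, d != 0 & in_span rho us (pact rho d x).

Local Notation L1 := (L1 rho).
Local Notation Lm1 := (Lm1 rho).
Local Notation pact := (pact rho).
Local Notation N := (size us).
Local Notation dep := (spanning_dependence span_us).

Lemma L1_injective y : L1 y = 0 -> y = 0.
Proof.
move=> L1y; apply: (intertwiner_injective tf dep (@L1_pact _ _ rho) (@mu_neq0 _) L1y).
exact: L1_iter_Lm1.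
Qed.

Lemma Lm1_injective y : Lm1 y = 0 -> y = 0.
Proof.
move=> Lm1y; apply: (intertwiner_injective tf dep (@Lm1_pact _ _ rho) (@nu_neq0 _) Lm1y).
exact: Lm1_iter_L1.
Qed.

Lemma L1_essentially_surjective x : exists2 h, h != 0 & exists y, pact h x = L1 y.
Proof. exact: (intertwiner_essentially_surjective dep (@L1_pact _ _ rho) L1_injective). Qed.

Lemma Lm1_essentially_surjective x : exists2 h, h != 0 & exists y, pact h x = Lm1 y.
Proof. exact: (intertwiner_essentially_surjective dep (@Lm1_pact _ _ rho) Lm1_injective). Qed.

Lemma span_preimage (A : {linear V -> V}) t :
  (forall p w, A (pact p w) = pact (shift t p) (A w)) ->
  (forall x, exists2 h, h != 0 & exists y, pact h x = A y) ->
  exists2 H, H != 0 &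
    forall j, (j < N)%N -> exists z, in_span rho us z /\ pact H us`_j = A z.
Proof.
move=> A_pact A_surj; apply: common_nonzero_multiple.
  move=> j h q [z [zs e]]; exists (pact (shift (- t) q) z); split; first exact: in_span_pact.
  by rewrite pactM e A_pact shiftNK.
move=> j _; have [h h0 [y ey]] := A_surj us`_j; have [d d0 dy] := span_us y.
exists (shift t d * h); first by rewrite mulf_neq0 ?shift_eq0.
by exists (pact d y); split=> //; rewrite pactM ey A_pact.
Qed.

Section Conductor.
Variable W : V -> Prop.
Hypothesis sW : is_submodule rho W.

Definition conductor g := forall j, (j < N)%N -> W (pact g us`_j).

Lemma conductor_mul g q : conductor g -> conductor (q * g).
Proof. by move=> Wg j lt_jN; rewrite pactM; apply: (submod_pact sW); apply: Wg. Qed.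

Lemma conductor_sub g q : conductor g -> conductor q -> conductor (g - q).
Proof.
move=> Wg Wq j lt_jN; rewrite pactB.
by apply: (submodD sW); [apply: Wg | apply/(submodN sW)/Wq].
Qed.

Lemma conductor_span g z : conductor g -> in_span rho us z -> W (pact g z).
Proof.
move=> Wg [a ->]; rewrite linear_sum; apply: (submod_sum sW) => j.
by rewrite /= pactAC; apply: (submod_pact sW); apply: Wg.
Qed.

Lemma conductor_shift (A : {linear V -> V}) t H :
  (forall p w, A (pact p w) = pact (shift t p) (A w)) -> (forall u, W u -> W (A u)) ->
  (forall j, (j < N)%N -> exists z, in_span rho us z /\ pact H us`_j = A z) ->
  forall g, conductor g -> conductor (shift t g * H).
Proof.
move=> A_pact AW hH g Wg j lt_jN; have [z [zs e]] := hH j lt_jN.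
by rewrite pactM e -A_pact; apply/AW/conductor_span.
Qed.

Hypothesis essW : essential rho W.

Lemma conductor_generator :
  exists2 g, g != 0 /\ conductor g & forall q, conductor q -> g %| q.
Proof.
apply: ideal_generator; [exact: conductor_mul | exact: conductor_sub |].
apply: (common_nonzero_multiple (Q := fun j g => W (pact g us`_j))).
  by move=> j g q Wg; rewrite pactM; apply: (submod_pact sW).
by move=> j _; have [p p0 Wp] := essW us`_j; exists p.
Qed.

End Conductor.

Lemma uniform_conductor : exists2 G, G != 0 &
  forall W, is_submodule rho W -> essential rho W -> conductor W G.
Proof.
have [H H0 hH] := span_preimage (@L1_pact _ _ rho) L1_essentially_surjective.
have [H' H'0 hH'] := span_preimage (@Lm1_pact _ _ rho) Lm1_essentially_surjective.
have [G G0 G_bound] := shift_divisors_bounded H0 H'0.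
exists G => // W sW essW; have [g [g0 Wg] g_dvd] := conductor_generator sW essW.
have /dvdpP[q ->] : g %| G.
  apply: G_bound => //; apply: g_dvd.
    by have /(_ g Wg) := conductor_shift sW (@L1_pact _ _ rho) (submodL1 sW) hH.
  by have /(_ g Wg) := conductor_shift sW (@Lm1_pact _ _ rho) (submodLm1 sW) hH'.
exact: conductor_mul.
Qed.

Lemma heart_neq0 : R_irreducible_rat rho -> exists u, heart rho u /\ u <> 0.
Proof.
move=> irr; have [[[x1 x2] [_ /(frac_eq0P tf)/= x10]] _] := irr.
have [G G0 G_cond] := uniform_conductor; have [d d0 dx] := span_us x1.
exists (pact G (pact d x1)); split; last by move/(tf G0)/(tf d0).
move=> W sW nzW; have essW := R_irreducible_essential tf irr sW nzW.
exact: conductor_span (G_cond W sW essW) dx.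
Qed.

End FiniteRank.

Theorem theorem7p20 (R : realType) (V : lmodType R[i]) (rho : sl2_module V) :
  finite_rank_torsion_free rho ->
  (simple_module rho -> R_irreducible_rat rho) /\
  (R_irreducible_rat rho ->
     simple_module rho \/
     exists U : V -> Prop,
       [/\ simple_submodule rho U, essential rho U &
           forall U', simple_submodule rho U' -> forall v, U' v <-> U v]).
Proof.
move=> [tf fr]; split; first exact: simple_R_irreducible.
move=> irr; right; have [us span_us] := finite_rank_spanning tf fr.
have heart_nz := heart_neq0 tf span_us irr.
exists (heart rho); split; first exact: heart_simple.
  by apply: (R_irreducible_essential tf irr) heart_nz; apply: heart_submodule.
exact: simple_submodule_heart.
Qed.
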